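(* Let $P,Q$ be convex polygons in the plane, with all vertices in general position, that form a weakly disjoint pair and satisfy $P\cap Q\neq\emptyset$. Then one of $P,Q$ contains a vertex of the other.
   Context: Two convex polygons $P,Q$ form a weakly disjoint pair if $P\setminus Q$ and $Q\setminus P$ are both connected sets and $P$ and $Q$ share no vertex. The convex hull of a line segment is regarded as a valid degenerate convex polygon with two edges. *)

From HB Require Import structures.
From mathcomp Require Import all_boot all_order all_algebra.
From mathcomp Require Import all_classical all_reals topology normedtype.
Set Implicit Arguments. Unset Strict Implicit. Unset Printing Implicit Defensive.
Import Order.TTheory GRing.Theory Num.Theory.
Import numFieldNormedType.Exports.
Local Open Scope ring_scope.
Local Open Scope classical_set_scope.

Definition pt (R : realType) := (R * R)%type.

Definition hull (R : realType) (V : seq (pt R)) : set (pt R) :=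
  [set p | exists w : nat -> R,
      (forall i, 0 <= w i) /\
      \sum_(i < size V) w i = 1 /\
      p.1 = \sum_(i < size V) w i * (nth (0, 0) V i).1 /\
      p.2 = \sum_(i < size V) w i * (nth (0, 0) V i).2].

(* V is the (duplicate-free) vertex list of a convex polygon: at least two
   vertices (a segment is a degenerate polygon), each vertex is extreme,
   i.e. not in the convex hull of the other vertices.  The polygon itself
   is the closed region hull V. *)
Definition convex_polygon (R : realType) (V : seq (pt R)) : Prop :=
  (2 <= size V)%N /\ uniq V /\ forall v, v \in V -> ~ hull (rem v V) v.

Definition orient (R : realType) (a b c : pt R) : R :=
  (b.1 - a.1) * (c.2 - a.2) - (b.2 - a.2) * (c.1 - a.1).

Definition general_position (R : realType) (S : seq (pt R)) : Prop :=
  forall a b c, a \in S -> b \in S -> c \in S ->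
    a != b -> b != c -> a != c -> orient a b c != 0.

Definition weakly_disjoint (R : realType) (V W : seq (pt R)) : Prop :=
  connected (hull V `\` hull W) /\ connected (hull W `\` hull V) /\
  (forall v, v \in V -> v \notin W).

From HB Require Import structures.
From mathcomp Require Import all_boot all_order all_algebra.
From mathcomp Require Import all_classical all_reals topology normedtype.
From mathcomp Require Import ring lra.
Set Implicit Arguments. Unset Strict Implicit. Unset Printing Implicit Defensive.
Import Order.TTheory GRing.Theory Num.Theory.
Import numFieldNormedType.Exports.
Local Open Scope ring_scope.
Local Open Scope classical_set_scope.

(* Suppose neither polygon contains a vertex of the other and pick p in both.
   Walking from p to a vertex of V we leave hull W through an edge [wi wj] of
   W, at a point k of hull V.  By general position no vertex of V lies on the
   line wi wj, so V has vertices strictly on both sides of it; they lie in the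
   connected set hull V \ hull W, hence the continuous function orient wi wj
   vanishes at some x of hull V \ hull W.  But the line meets the convex set
   hull V, which contains k and neither wi nor wj, only inside [wi wj]; so x
   is in hull W, a contradiction. *)

Section Plane.
Variable R : realType.
Implicit Types (a b c p q x y z : pt R) (t : R).

Definition lerp a b t : pt R :=
  ((1 - t) * a.1 + t * b.1, (1 - t) * a.2 + t * b.2).

Definition seg a b : set (pt R) := [set x | exists2 t, 0 <= t <= 1 & x = lerp a b t].

Definition triangle a b c : set (pt R) := [set q | exists2 y, seg b c y & seg a y q].

Lemma lerp0 a b : lerp a b 0 = a.
Proof. by case: a => a1 a2; rewrite /lerp /=; congr (_, _); ring. Qed.

Lemma lerpxx a t : lerp a a t = a.
Proof. by case: a => a1 a2; rewrite /lerp /=; congr (_, _); ring. Qed.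

Lemma seg_refl a b : seg a b a.
Proof. by exists 0; rewrite ?lerp0 // lexx ler01. Qed.

Lemma seg_same a x : seg a a x -> x = a.
Proof. by case=> t _ ->; rewrite lerpxx. Qed.

Lemma seg_trans p q z r : seg p q z -> seg z q r -> seg p q r.
Proof.
case=> t t01 ->; case=> u u01 ->; exists (t + u - t * u); first nra.
by rewrite /lerp /=; congr (_, _); ring.
Qed.

Lemma seg_orient_eq0 a b x : seg a b x -> orient a b x = 0.
Proof. by case=> t _ ->; rewrite /orient /=; ring. Qed.

Lemma seg_cevian a x p q y :
  seg a x p -> seg x q y -> exists2 z, seg p q z & seg a y z.
Proof.
case=> s /andP[s0 s1] ->; case=> u /andP[u0 u1] ->.
have [D0|D0] := eqVneq (1 - u + s * u) 0.
  have -> : s = 0 by nra.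
  by rewrite lerp0; exists a; apply: seg_refl.
have Dgt0 : 0 < 1 - u + s * u by rewrite lt_def D0 /=; nra.
pose b := s / (1 - u + s * u).
have b01 : 0 <= b <= 1.
  by rewrite divr_ge0 //=; [rewrite ler_pdivrMr // mul1r; nra | lra].
exists (lerp a (lerp x q u) b); last by exists b.
exists (b * u); first nra.
by rewrite /lerp /b /=; congr (_, _); field.
Qed.

Lemma general_position_sub (S T : seq (pt R)) :
  {subset S <= T} -> general_position T -> general_position S.
Proof. by move=> ST gpT a b c /ST aT /ST bT /ST cT; apply: gpT. Qed.

Section Hull.
Variable V : seq (pt R).

Lemma mem_hull v : v \in V -> hull V v.
Proof.
move=> vV; have vi : (index v V < size V)%N by rewrite index_mem.
pose w i : R := (i == index v V)%:R.
have sum_w (F : nat -> R) : \sum_(i < size V) w i * F i = F (index v V).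
  rewrite (bigD1 (Ordinal vi)) //= /w eqxx mul1r big1 ?addr0 // => i ne_i.
  by case: eqP => [ei|]; [case/eqP: ne_i; apply: val_inj | rewrite mul0r].
exists w; split; first by move=> i; rewrite ler0n.
split; first by rewrite -[RHS](sum_w (fun _ => 1)); apply: eq_bigr => i _; rewrite mulr1.
rewrite (sum_w (fun i => (nth (0, 0) V i).1)) (sum_w (fun i => (nth (0, 0) V i).2)).
by rewrite nth_index.
Qed.

Lemma hull_seg x y z : hull V x -> hull V y -> seg x y z -> hull V z.
Proof.
move=> [wx [wx0 [sx [x1 x2]]]] [wy [wy0 [sy [y1 y2]]]] [t /andP[t0 t1] ->].
exists (fun i => (1 - t) * wx i + t * wy i); split.
  by move=> i; apply: addr_ge0; apply: mulr_ge0 => //; lra.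
split; first by rewrite big_split /= -!mulr_sumr sx sy; ring.
rewrite /= x1 y1 x2 y2 !mulr_sumr -!big_split /=.
by split; apply: eq_bigr => i _; ring.
Qed.

Lemma triangle_sub_hull a b c :
  a \in V -> b \in V -> c \in V -> triangle a b c `<=` hull V.
Proof.
move=> aV bV cV q [y bcy ayq].
by apply: hull_seg ayq; [apply: mem_hull | apply: hull_seg bcy; apply: mem_hull].
Qed.

Lemma hull_affine_gt0 (al be ga : R) k :
  (forall v, v \in V -> 0 < al * v.1 + be * v.2 + ga) ->
  hull V k -> 0 < al * k.1 + be * k.2 + ga.
Proof.
move=> gt0 [w [w0 [s [k1 k2]]]].
pose g i := al * (nth (0, 0) V i).1 + be * (nth (0, 0) V i).2 + ga.
have g_gt0 (i : 'I_(size V)) : 0 < g i by apply/gt0/mem_nth.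
have -> : al * k.1 + be * k.2 + ga = \sum_(i < size V) w i * g i.
  rewrite k1 k2 -[ga]mulr1 -s !mulr_sumr -!big_split /=.
  by apply: eq_bigr => i _; rewrite /g; ring.
have wg_ge0 (i : 'I_(size V)) : 0 <= w i * g i := mulr_ge0 (w0 i) (ltW (g_gt0 i)).
rewrite lt_def sumr_ge0 ?andbT => [|i _]; last exact: wg_ge0.
apply/eqP => /(psumr_eq0P (fun i _ => wg_ge0 i)) wg0.
move: s; rewrite big1 => [/esym/eqP|i _]; first by rewrite oner_eq0.
by have /eqP := wg0 i isT; rewrite mulf_eq0 (gt_eqF (g_gt0 i)) orbF => /eqP.
Qed.

End Hull.

Lemma hull_nil p : ~ hull [::] p.
Proof. by move=> [w [_ [/esym/eqP + _]]]; rewrite big_ord0 oner_eq0. Qed.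

Lemma hull_cons a V p : hull V p -> hull (a :: V) p.
Proof.
move=> [w [w0 [s [p1 p2]]]].
exists (fun i => if i is j.+1 then w j else 0); split; first by case.
by rewrite !big_ord_recl /= !mul0r !add0r.
Qed.

Lemma hull_consP a V p :
  hull (a :: V) p -> p = a \/ exists2 x, hull V x & seg a x p.
Proof.
move=> [w [w0 [+ [+ +]]]]; rewrite !big_ord_recl /=.
set S := \sum_(i < size V) w (lift ord0 i).
have S0 : 0 <= S by apply: sumr_ge0.
move=> s p1 p2.
have [SZ|SNZ] := eqVneq S 0.
  have wV0 (i : 'I_(size V)) : w (lift ord0 i) = 0 by apply: (psumr_eq0P _ SZ).
  have w0a : w 0%N = 1 by rewrite -s SZ addr0.
  left; case: p p1 p2 => p1' p2' /= -> ->; case: a => a1 a2 /=.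
  by rewrite w0a !big1 ?addr0 ?mul1r // => i _; rewrite wV0 mul0r.
right; have SP : 0 < S by rewrite lt_def SNZ.
pose x := (\sum_(i < size V) w (lift ord0 i) / S * (nth (0,0) V i).1,
           \sum_(i < size V) w (lift ord0 i) / S * (nth (0,0) V i).2).
exists x.
  exists (fun i => w i.+1 / S); split; first by move=> i; apply: divr_ge0.
  by split => //; rewrite -mulr_suml divff.
exists S; first by rewrite S0 /= -subr_ge0 -s addrK.
have w0a : w 0%N = 1 - S by rewrite -s addrK.
case: p p1 p2 => p1' p2' /= -> ->; rewrite /lerp /= w0a !mulr_sumr.
by congr (_, _); congr (_ + _); apply: eq_bigr => i _; field.
Qed.

(* The time at which [(1 - t) X + t X'] reaches [0], or [1] if it never does. *)
Definition exit_time (X X' : R) := if X' < 0 then X / (X - X') else 1.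

Lemma exit_time_itv X X' : 0 <= X -> 0 <= exit_time X X' <= 1.
Proof.
rewrite /exit_time => X0; case: (ltrP X' 0) => X'0; last lra.
have D : 0 < X - X' by lra.
by rewrite divr_ge0 /=; [rewrite ler_pdivrMr // mul1r; lra | lra | lra].
Qed.

Lemma exit_time_ge0 X X' t : 0 <= X ->
  0 <= t <= 1 -> t <= exit_time X X' -> 0 <= (1 - t) * X + t * X'.
Proof.
move=> X0 /andP[t0 t1]; rewrite /exit_time; case: (ltrP X' 0) => X'0; last nra.
have D : 0 < X - X' by lra.
by rewrite ler_pdivlMr //; nra.
Qed.

Lemma exit_timeE X X' : 0 <= X -> X' < 0 ->
  (1 - exit_time X X') * X + exit_time X X' * X' = 0.
Proof.
move=> X0 X'0; rewrite /exit_time X'0.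
have D : X - X' != 0 by rewrite subr_eq0; apply/eqP; lra.
by field.
Qed.

Lemma first_exit3 (A B C A' B' C' : R) : 0 <= A -> 0 <= B -> 0 <= C ->
  [\/ A' < 0, B' < 0 | C' < 0] ->
  exists2 t, 0 <= t <= 1 &
    [/\ 0 <= (1 - t) * A + t * A', 0 <= (1 - t) * B + t * B',
        0 <= (1 - t) * C + t * C' &
        ((1 - t) * A + t * A') * ((1 - t) * B + t * B') * ((1 - t) * C + t * C') = 0].
Proof.
move=> A0 B0 C0 neg.
set ta := exit_time A A'; set tb := exit_time B B'; set tc := exit_time C C'.
have [m [mE ma mb mc]] : exists m, [/\ [\/ m = ta, m = tb | m = tc], m <= ta, m <= tb & m <= tc].
{ have [h1|h1] := lerP ta tb; have [h2|h2] := lerP ta tc; have [h3|h3] := lerP tb tc.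
  all: first [ by exists ta; split; [constructor 1 | lra ..]
             | by exists tb; split; [constructor 2 | lra ..]
             | by exists tc; split; [constructor 3 | lra ..] ]. }
have m01 : 0 <= m <= 1.
  by case: mE => ->; apply: exit_time_itv.
have pa := exit_time_ge0 A0 m01 ma; have pb := exit_time_ge0 B0 m01 mb.
have pc := exit_time_ge0 C0 m01 mc.
exists m => //; split => //.
suff : [\/ (1 - m) * A + m * A' = 0, (1 - m) * B + m * B' = 0 | (1 - m) * C + m * C' = 0].
  by case=> [->|->|->]; rewrite ?mul0r ?mulr0 ?mul0r.
case: mE => E.
- have [A'0|A'0] := ltrP A' 0; first by constructor 1; rewrite E exit_timeE.
  by move: E; rewrite /ta /exit_time ltNge A'0 /= => E; rewrite E in pb pc; case: neg; lra.
- have [B'0|B'0] := ltrP B' 0; first by constructor 2; rewrite E exit_timeE.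
  by move: E; rewrite /tb /exit_time ltNge B'0 /= => E; rewrite E in pa pc; case: neg; lra.
- have [C'0|C'0] := ltrP C' 0; first by constructor 3; rewrite E exit_timeE.
  by move: E; rewrite /tc /exit_time ltNge C'0 /= => E; rewrite E in pa pb; case: neg; lra.
Qed.

Section Barycentric.
Variables a b c : pt R.
Hypothesis abc : orient a b c != 0.

Definition bary_a x := orient x b c / orient a b c.
Definition bary_b x := orient a x c / orient a b c.
Definition bary_c x := orient a b x / orient a b c.

(* [abc] with [orient] unfolded, for [field] to discharge its side conditions. *)
Let abcE : (b.1 - a.1) * (c.2 - a.2) - (b.2 - a.2) * (c.1 - a.1) != 0 := abc.

Lemma bary_sum x : bary_a x + bary_b x + bary_c x = 1.
Proof. by rewrite /bary_a /bary_b /bary_c /orient; field. Qed.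

Lemma bary_combination x : x =
  (bary_a x * a.1 + bary_b x * b.1 + bary_c x * c.1,
   bary_a x * a.2 + bary_b x * b.2 + bary_c x * c.2).
Proof. by case: x => x1 x2; rewrite /bary_a /bary_b /bary_c /orient /=; congr (_, _); field. Qed.

Lemma bary_a_lerp x y t : bary_a (lerp x y t) = (1 - t) * bary_a x + t * bary_a y.
Proof. by rewrite /bary_a /orient /=; field. Qed.

Lemma bary_b_lerp x y t : bary_b (lerp x y t) = (1 - t) * bary_b x + t * bary_b y.
Proof. by rewrite /bary_b /orient /=; field. Qed.

Lemma bary_c_lerp x y t : bary_c (lerp x y t) = (1 - t) * bary_c x + t * bary_c y.
Proof. by rewrite /bary_c /orient /=; field. Qed.

Lemma triangle_bary_ge0 z :
  triangle a b c z -> [/\ 0 <= bary_a z, 0 <= bary_b z & 0 <= bary_c z].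
Proof.
case=> y [u /andP[u0 u1] yE] [t /andP[t0 t1] zE].
have -> : bary_a z = 1 - t by rewrite /bary_a /orient zE yE /=; field.
have -> : bary_b z = t * (1 - u) by rewrite /bary_b /orient zE yE /=; field.
have -> : bary_c z = t * u by rewrite /bary_c /orient zE yE /=; field.
by split; nra.
Qed.

Lemma bary_ge0_triangle q :
  0 <= bary_a q -> 0 <= bary_b q -> 0 <= bary_c q -> triangle a b c q.
Proof.
have qE := bary_combination q; have S := bary_sum q.
move: qE S; set A := bary_a q; set B := bary_b q; set C := bary_c q => qE S A0 B0 C0.
have [BC0|BC0] := eqVneq (B + C) 0.
  exists b; first exact: seg_refl.
  exists 0; first by rewrite lexx ler01.
  have [A1 B0' C0'] : [/\ A = 1, B = 0 & C = 0] by split; lra.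
  by rewrite qE A1 B0' C0' /lerp /=; congr (_, _); ring.
have BCgt0 : 0 < B + C by rewrite lt_def BC0 /=; lra.
exists (lerp b c (C / (B + C))).
  exists (C / (B + C)) => //.
  by rewrite divr_ge0 //=; [rewrite ler_pdivrMr // mul1r; lra | lra].
exists (B + C); first lra.
by rewrite qE /lerp /= (_ : A = 1 - (B + C)); [congr (_, _); field | lra].
Qed.

Lemma bary_edge r : 0 <= bary_a r -> 0 <= bary_b r -> 0 <= bary_c r ->
  bary_a r * bary_b r * bary_c r = 0 -> [\/ seg a b r, seg b c r | seg c a r].
Proof.
have rE := bary_combination r; have S := bary_sum r.
move: rE S; set A := bary_a r; set B := bary_b r; set C := bary_c r => rE S A0 B0 C0.
move=> /eqP; rewrite 2!mulf_eq0 -orbA => /or3P[] /eqP ABC0.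
- by constructor 2; exists C; [lra | rewrite rE ABC0 (_ : B = 1 - C); [congr (_, _); ring | lra]].
- by constructor 3; exists A; [lra | rewrite rE ABC0 (_ : C = 1 - A); [congr (_, _); ring | lra]].
- by constructor 1; exists B; [lra | rewrite rE ABC0 (_ : A = 1 - B); [congr (_, _); ring | lra]].
Qed.

Lemma triangle_exit z q : triangle a b c z -> ~ triangle a b c q ->
  exists2 r, seg z q r & [\/ seg a b r, seg b c r | seg c a r].
Proof.
move=> /triangle_bary_ge0[za zb zc] q_out.
have q_neg : [\/ bary_a q < 0, bary_b q < 0 | bary_c q < 0].
  have [qa|qa] := ltrP (bary_a q) 0; first by constructor 1.
  have [qb|qb] := ltrP (bary_b q) 0; first by constructor 2.
  have [qc|qc] := ltrP (bary_c q) 0; first by constructor 3.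
  by case: q_out; apply: bary_ge0_triangle.
have [m m01 [ra rb rc r0]] := first_exit3 za zb zc q_neg.
exists (lerp z q m); first by exists m.
by apply: bary_edge; rewrite ?bary_a_lerp ?bary_b_lerp ?bary_c_lerp.
Qed.

End Barycentric.

(* Write [p] on [a x] with [x] in the hull of the remaining vertices; the exit
   point of [x q] lies on an edge [b c], and the exit point of [p q] is then
   found on the boundary of the triangle [a b c]. *)
Lemma hull_exit_edge W p q : uniq W -> general_position W ->
  hull W p -> ~ hull W q ->
  exists wi wj z, [/\ wi \in W, wj \in W, seg p q z & seg wi wj z].
Proof.
elim: W p => [|a W IH] p; first by move=> _ _ /hull_nil.
move=> /andP[aW uW] gp /hull_consP[->|[x xW ax_p]] q_out.
  by exists a, a, a; rewrite mem_head; split=> //; apply: seg_refl.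
have gpW : general_position W := general_position_sub (@mem_behead _ (a :: W)) gp.
have [b [c [y [bW cW xq_y bc_y]]]] := IH x uW gpW xW (fun h => q_out (hull_cons a h)).
have [z pq_z ay_z] := seg_cevian ax_p xq_y.
have aI := mem_head a W.
have bI : b \in a :: W by rewrite inE bW orbT.
have cI : c \in a :: W by rewrite inE cW orbT.
have [bc|bc] := eqVneq b c.
  by move: bc_y ay_z; rewrite -bc => /seg_same -> ay_z; exists a, b, z.
have abc : orient a b c != 0.
  by apply: gp => //; apply: contraNneq aW => ->.
have z_tri : triangle a b c z by exists y.
have q_tri : ~ triangle a b c q by move=> /(triangle_sub_hull aI bI cI).
have [r zq_r edge] := triangle_exit abc z_tri q_tri.
have pq_r := seg_trans pq_z zq_r.
by case: edge => e; [exists a, b, r | exists b, c, r | exists c, a, r].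
Qed.

Lemma orient_eq0_lerp a b x : a != b -> orient a b x = 0 -> exists u, x = lerp a b u.
Proof.
case: a b x => a1 a2 [b1 b2] [x1 x2]; rewrite /orient /= xpair_eqE negb_and.
case/orP=> ab O.
- have ba : b1 - a1 != 0 by rewrite subr_eq0 eq_sym.
  have O' : (b1 - a1) * (x2 - a2) = (b2 - a2) * (x1 - a1) by apply/eqP; rewrite -subr_eq0 O.
  have x2E : x2 = a2 + (b1 - a1) * (x2 - a2) / (b1 - a1) by field.
  exists ((x1 - a1) / (b1 - a1)); rewrite /lerp /=; congr (_, _); first by field.
  by rewrite {1}x2E O'; field.
- have ba : b2 - a2 != 0 by rewrite subr_eq0 eq_sym.
  have O' : (b2 - a2) * (x1 - a1) = (b1 - a1) * (x2 - a2).
    by apply/eqP; rewrite -subr_eq0 -oppr_eq0 opprB O.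
  have x1E : x1 = a1 + (b2 - a2) * (x1 - a1) / (b2 - a2) by field.
  exists ((x2 - a2) / (b2 - a2)); rewrite /lerp /=; congr (_, _); last by field.
  by rewrite {1}x1E O'; field.
Qed.

Lemma collinear_hull_seg V a b k x : a != b -> ~ hull V a -> ~ hull V b ->
  seg a b k -> hull V k -> hull V x -> orient a b x = 0 -> seg a b x.
Proof.
move=> ab aV bV [s /andP[s0 s1] kE] kV xV /(orient_eq0_lerp ab)[u xE].
have [u1|u1] := ltrP 1 u.
  case: bV; apply: hull_seg kV xV _; exists ((1 - s) / (u - s)).
    by rewrite divr_ge0 /=; [rewrite ler_pdivrMr ?mul1r; lra | lra | lra].
  have us : u - s != 0 by apply/eqP; lra.
  by case: b {ab} kE xE => b1 b2 -> ->; rewrite /lerp /=; congr (_, _); field.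
have [u0|u0] := ltrP u 0.
  case: aV; apply: hull_seg kV xV _; exists (s / (s - u)).
    by rewrite divr_ge0 /=; [rewrite ler_pdivrMr ?mul1r; lra | lra | lra].
  have us : s - u != 0 by apply/eqP; lra.
  by case: a {ab} kE xE => a1 a2 -> ->; rewrite /lerp /=; congr (_, _); field.
by exists u; rewrite ?u0.
Qed.

Lemma continuous_orient a b : continuous (orient a b).
Proof.
move=> x; rewrite /orient.
by apply: cvgB; apply: cvgM; apply: cvgB; first [exact: cvg_cst | exact: cvg_fst | exact: cvg_snd].
Qed.

Lemma connected_orient_eq0 (A : set (pt R)) a b u v : connected A -> A u -> A v ->
  orient a b u <= 0 <= orient a b v -> exists2 x, A x & orient a b x = 0.
Proof.
move=> cA Au Av uv.
have /connected_intervalP itv : connected (orient a b @` A).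
  apply: connected_continuous_connected cA _.
  by apply: continuous_subspaceT => x; apply: continuous_orient.
by have [x Ax <-] := itv _ _ (imageP _ Au) (imageP _ Av) 0 uv; exists x.
Qed.

Lemma hull_orient_sides V a b k : hull V k -> orient a b k = 0 ->
  (forall v, v \in V -> orient a b v != 0) ->
  (exists2 v, v \in V & orient a b v < 0) /\ (exists2 v, v \in V & 0 < orient a b v).
Proof.
move=> kV k0 nz.
have side (s : R) : s != 0 -> exists2 v, v \in V & 0 < s * orient a b v.
  move=> s0; apply: contrapT => none.
  have orientE y : - s * orient a b y = s * (b.2 - a.2) * y.1 + - s * (b.1 - a.1) * y.2
      + - s * ((b.2 - a.2) * a.1 - (b.1 - a.1) * a.2) by rewrite /orient; ring.
  suff : 0 < - s * orient a b k by rewrite k0 mulr0 ltxx.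
  rewrite orientE; apply: hull_affine_gt0 kV => v vV; rewrite -orientE mulNr oppr_gt0.
  rewrite lt_neqAle mulf_neq0 ?nz //= leNgt; apply/negP => pos; apply: none.
  by exists v.
split.
  have [|v vV] := side (-1); first by rewrite oppr_eq0 oner_eq0.
  by rewrite mulN1r oppr_gt0; exists v.
by have [v vV] := side 1 (oner_neq0 R); rewrite mul1r; exists v.
Qed.

End Plane.

Theorem lemma3 (R : realType) (V W : seq (pt R)) :
  convex_polygon V -> convex_polygon W ->
  general_position (V ++ W) ->
  weakly_disjoint V W ->
  hull V `&` hull W !=set0 ->
  (exists2 v, v \in V & hull W v) \/ (exists2 w, w \in W & hull V w).
Proof.
move=> [V2 _] [_ [uW _]] gp [cVW [_ disjVW]] [p [pV pW]].
apply: contrapT => no_vertex.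
have nV v : v \in V -> ~ hull W v by move=> vV hv; apply: no_vertex; left; exists v.
have nW w : w \in W -> ~ hull V w by move=> wW hw; apply: no_vertex; right; exists w.
have v0V := mem_nth (0, 0) (ltnW V2).
have gpW : general_position W.
  by apply: general_position_sub gp => w wW; rewrite mem_cat wW orbT.
have [wi [wj [k [wiW wjW pk wk]]]] := hull_exit_edge uW gpW pW (nV _ v0V).
have kV : hull V k := hull_seg pV (mem_hull v0V) pk.
have wij : wi != wj.
  by apply: contraPneq (nW _ wiW) => ij; move: wk; rewrite -ij => /seg_same <-.
have off_line v : v \in V -> orient wi wj v != 0.
  move=> vV; have vW : v \notin W := disjVW v vV.
  by apply: gp; rewrite ?mem_cat ?vV ?wiW ?wjW ?orbT //; apply: contraNneq vW => <-.
have [[vm vmV vm_neg] [vp vpV vp_pos]] := hull_orient_sides kV (seg_orient_eq0 wk) off_line.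
have vm_out : (hull V `\` hull W) vm by split; [apply: mem_hull | apply: nV].
have vp_out : (hull V `\` hull W) vp by split; [apply: mem_hull | apply: nV].
have [|x [xV xW] x0] := @connected_orient_eq0 _ _ wi wj _ _ cVW vm_out vp_out.
  by rewrite !ltW.
apply: xW; apply: hull_seg (mem_hull wiW) (mem_hull wjW) _.
exact: collinear_hull_seg wij (nW _ wiW) (nW _ wjW) wk kV xV x0.
Qed.
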